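(* Let $K$ be an algebraically closed field of characteristic $0$, let $1\le t\le m\le n$, and let $V,W$ be $K$-vector spaces of dimensions $m,n$. Then there exist elements $x\in X_t(V,W)$ with each of the following combinations of small rank and rank: $\operatorname{sr}(x)=\operatorname{rank}x=0$; $\operatorname{sr}(x)=\operatorname{rank}x=1$; $\operatorname{sr}(x)=u$ and $\operatorname{rank}x=\binom{u+k-1}{u-1}$ for every $u\in\{2,\dots,t+1\}$ and every $k\in\{1,\dots,m-t\}$.
   Context: For $t\ge0$ let $\Lambda_t:\operatorname{Hom}_K(V,W)\to\operatorname{Hom}_K(\bigwedge^tV,\bigwedge^tW)$, $\Lambda_t(\phi)=\bigwedge^t\phi$. $X_t(V,W)$ is the Zariski closure of the image of $\Lambda_t$ in the affine space $\operatorname{Hom}_K(\bigwedge^tV,\bigwedge^tW)$. For $\psi\in\operatorname{Hom}_K(\bigwedge^tV,\bigwedge^tW)$, $\operatorname{rank}\psi$ is its rank as a linear map, and the small rank $\operatorname{sr}(\psi)$ is the maximum of the ranks of the restrictions of $\psi$ to the subspaces $\bigwedge^tU\subseteq\bigwedge^tV$, where $U$ ranges over all subspaces of $V$ of dimension $\le t+1$. *)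

From HB Require Import structures.
From mathcomp Require Import all_boot all_order all_algebra.
From mathcomp Require Import mpoly.
Set Implicit Arguments. Unset Strict Implicit. Unset Printing Implicit Defensive.
Import Order.TTheory GRing.Theory.
Local Open Scope ring_scope.

(* Strictly increasing maps 'I_t -> 'I_p: they index the t-subsets of 'I_p,
   i.e. the standard basis e_{i_1} /\ ... /\ e_{i_t} (i_1 < ... < i_t)
   of the exterior power /\^t K^p. *)
Definition incmap (t p : nat) :=
  {f : {ffun 'I_t -> 'I_p} | [forall i : 'I_t, forall j : 'I_t, (i < j)%N ==> (f i < f j)%N]}.

(* dimension of /\^t K^p (= 'C(p, t)) *)
Definition wdim (t p : nat) : nat := #|{: incmap t p}|.

Definition widx (t p : nat) (i : 'I_(wdim t p)) : 'I_t -> 'I_p :=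
  val (enum_val i).

(* Matrix of /\^t phi for phi : K^p -> K^q given (row-vector convention,
   v |-> v *m A) by A : 'M_(p, q): the t-th compound matrix of t x t minors. *)
Definition compound (K : comRingType) (t p q : nat) (A : 'M[K]_(p, q))
  : 'M[K]_(wdim t p, wdim t q) :=
  \matrix_(I, J) \det (mxsub (widx I) (widx J) A).

(* Zariski closure X_t(V,W) of the image of Lambda_t in the affine space
   Hom(/\^t V, /\^t W) = 'M_(wdim t m, wdim t n), with V = K^m, W = K^n:
   x lies in it iff every polynomial function on the affine space vanishing
   on the image of Lambda_t vanishes at x. *)
Definition coords (K : comRingType) (a b : nat) (x : 'M[K]_(a, b)) :
  'I_(a * b) -> K := fun k => mxvec x 0 k.

Definition in_Xt (K : fieldType) (t m n : nat)
  (x : 'M[K]_(wdim t m, wdim t n)) : Prop :=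
  forall p : {mpoly K[wdim t m * wdim t n]},
    (forall phi : 'M[K]_(m, n), p.@[coords (compound t phi)] = 0) ->
    p.@[coords x] = 0.

(* Small rank: sr(x) = r means r is the maximum, over subspaces U of K^m of
   dimension <= t+1 (U given as the row space of a square matrix U), of the
   rank of x restricted to /\^t U; the row space of compound t U is exactly
   /\^t U inside /\^t K^m, so that rank is \rank (compound t U *m x). *)
Definition small_rank_is (K : fieldType) (t m n : nat)
  (x : 'M[K]_(wdim t m, wdim t n)) (r : nat) : Prop :=
  (exists U : 'M[K]_m, (\rank U <= t.+1)%N /\ \rank (compound t U *m x) = r) /\
  (forall U : 'M[K]_m, (\rank U <= t.+1)%N -> (\rank (compound t U *m x) <= r)%N).

From HB Require Import structures.
From mathcomp Require Import all_boot all_order all_algebra.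
From mathcomp Require Import mpoly.
From mathcomp Require Import zify fingroup perm.
Set Implicit Arguments. Unset Strict Implicit. Unset Printing Implicit Defensive.
Import Order.TTheory GRing.Theory.
Local Open Scope ring_scope.

(* For a <= t and a <= b <= m, let x_{a,b} be the "partial identity"
   /\^t K^m -> /\^t K^n keeping exactly the basis vectors e_I with
   {0..a-1} <= I <= {0..b-1}; its rank is the number 'C(b - a, t - a) of such I.

   x_{a,b} lies in X_t: it is the value at s = 0 of the polynomial curve extending
   s |-> /\^t diag(s^-(t-a) on {0..a-1}, s^a on {a..b-1}, 0 elsewhere), whose entry at
   e_I is s^(t (a - |I /\ {0..a-1}|)) for I <= {0..b-1}; in characteristic 0 a
   polynomial vanishing along the curve for s <> 0 vanishes at s = 0.

   Its small rank is t+1-a.  A matrix U of rank <= t+1 factors as C D with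
   D : (t+1) x m, and after a change of basis of K^(t+1) the first a columns of D
   are supported on its first a rows.  Every row of /\^t U, restricted to
   the e_I with I containing {0..a-1}, is then a combination of the t+1-a rows of
   maximal minors of D omitting one row r >= a: omitting r < a leaves the first a
   columns of rank < a.  The bound is attained by U = span(e_0, .., e_t).

   With a = t+1-u, b = t+k this gives small rank u and rank 'C(u+k-1, u-1); the pairs
   a = b = t and a = b = 0 give (1, 1) and (0, 0). *)

(** * Increasing maps as t-subsets *)

Section WedgeIndex.
Variables t p : nat.
Implicit Types I J : 'I_(wdim t p).

Lemma widx_lt I (i j : 'I_t) : (i < j)%N -> (widx I i < widx I j)%N.
Proof.
rewrite /widx; case: (enum_val I) => f /= /forallP incf.
exact: (implyP (forallP (incf i) j)).
Qed.

Lemma widx_inj I : injective (widx I).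
Proof.
move=> i j eij; apply: val_inj.
by case: (ltngtP i j) => // lt_ij; have := widx_lt I lt_ij; rewrite eij ltnn.
Qed.

Definition wseq I : seq nat := [seq widx I k : nat | k <- enum 'I_t].

Definition wset I : {set 'I_p} := [set widx I k | k : 'I_t].

Lemma wseq_sorted I : sorted ltn (wseq I).
Proof.
rewrite /wseq sorted_map.
have : sorted ltn (map val (enum 'I_t)) by rewrite val_enum_ord iota_ltn_sorted.
by rewrite sorted_map; apply: sub_sorted => i j; apply: widx_lt.
Qed.

Lemma size_wseq I : size (wseq I) = t.
Proof. by rewrite size_map size_enum_ord. Qed.

Lemma nth_wseq I (k : 'I_t) : nth 0%N (wseq I) k = widx I k.
Proof. by rewrite (nth_map k) ?size_enum_ord // nth_ord_enum. Qed.

Lemma mem_wseq I v : (v \in wseq I) = [exists k, widx I k == v :> nat].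
Proof.
apply/mapP/existsP => [[k _ ->]|[k /eqP <-]]; first by exists k.
by exists k; rewrite ?mem_enum.
Qed.

Lemma wseq_inj : injective wseq.
Proof.
move=> I J eIJ; apply: enum_val_inj; apply: val_inj; apply/ffunP => k.
by apply: val_inj; rewrite /= -!nth_wseq eIJ.
Qed.

Lemma card_wset I : #|wset I| = t.
Proof. by rewrite card_imset ?card_ord //; apply: widx_inj. Qed.

Lemma mem_wset I (j : 'I_p) : (j \in wset I) = (nat_of_ord j \in wseq I).
Proof.
rewrite mem_wseq; apply/imsetP/existsP => [[k _ ->]|[k /eqP e]]; first by exists k.
by exists k => //; apply: val_inj.
Qed.

Lemma wset_inj : injective wset.
Proof.
have sub_wseq I1 I2 : wset I1 = wset I2 -> {subset wseq I1 <= wseq I2}.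
  move=> e12 v vI1; have /mapP[k _ vk] := vI1.
  have vp : (v < p)%N by rewrite vk ltn_ord.
  by move: vI1; rewrite -[v]/(val (Ordinal vp)) -!mem_wset e12.
move=> I J eIJ; apply: wseq_inj.
apply: (irr_sorted_eq ltn_trans ltnn); try exact: wseq_sorted.
by move=> v; apply/idP/idP; apply: sub_wseq.
Qed.

Definition incidx (f : 'I_t -> 'I_p)
    (incf : forall i j : 'I_t, (i < j)%N -> (f i < f j)%N) : 'I_(wdim t p).
Proof.
refine (enum_rank (exist _ (finfun f) _ : incmap t p)).
by apply/forallP => i; apply/forallP => j; apply/implyP; rewrite !ffunE; apply: incf.
Defined.

Lemma widx_incidx f incf : widx (@incidx f incf) =1 f.
Proof. by move=> k; rewrite /widx /incidx enum_rankK /= ffunE. Qed.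

Lemma wset_surj (p_gt0 : (0 < p)%N) (S : {set 'I_p}) :
  #|S| = t -> exists I, wset I = S.
Proof.
move=> cardS; pose j0 : 'I_p := Ordinal p_gt0.
have sizeS : size (enum S) = t by rewrite -cardE.
have sortedS : sorted ltn (map val (enum S)).
  rewrite -[enum _](eq_filter (mem_enum _)) -(eq_filter (mem_map val_inj _)).
  by rewrite -filter_map (sorted_filter ltn_trans) // unlock val_ord_enum iota_ltn_sorted.
pose f (k : 'I_t) := nth j0 (enum S) k.
have incf (i j : 'I_t) : (i < j)%N -> (f i < f j)%N.
  move=> lt_ij; rewrite /f -!(nth_map j0 (val j0)) ?sizeS //.
  by apply: (sorted_ltn_nth ltn_trans) => //; rewrite inE size_map sizeS.
exists (incidx incf); apply/eqP; rewrite eqEcard card_wset cardS leqnn andbT.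
apply/subsetP => _ /imsetP[k _ ->].
by rewrite widx_incidx -mem_enum mem_nth // sizeS.
Qed.

End WedgeIndex.

Lemma wseq_eqP t m n (I : 'I_(wdim t m)) (J : 'I_(wdim t n)) :
  reflect (forall k, widx I k = widx J k :> nat) (wseq I == wseq J).
Proof.
apply: (iffP eqP) => [eIJ k | eIJ]; first by rewrite -!nth_wseq eIJ.
by apply: eq_map => k /=; rewrite eIJ.
Qed.

Lemma wseq_notin t m n (I : 'I_(wdim t m)) (J : 'I_(wdim t n)) :
  wseq I != wseq J -> exists k, (widx I k : nat) \notin wseq J.
Proof.
move=> neqIJ; suff /allPn[_ /mapP[k _ ->] notinJ] : ~~ all (mem (wseq J)) (wseq I).
  by exists k.
apply: contra neqIJ => /allP subIJ.
have uniqI := sorted_uniq ltn_trans ltnn (wseq_sorted I).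
have [|_ eqIJ] := uniq_min_size uniqI subIJ; first by rewrite !size_wseq.
by apply/eqP/(irr_sorted_eq ltn_trans ltnn); rewrite ?wseq_sorted.
Qed.

Definition rdiag_mx (R : nzRingType) m n (d : 'I_m -> R) : 'M[R]_(m, n) :=
  \matrix_(i, j) ((i == j :> nat)%:R * d i).

Lemma compound_rdiag_mx (R : comNzRingType) t m n (d : 'I_m -> R)
    (I : 'I_(wdim t m)) (J : 'I_(wdim t n)) :
  compound t (rdiag_mx n d) I J = (wseq I == wseq J)%:R * \prod_k d (widx I k).
Proof.
rewrite mxE; have [eIJ|neqIJ] := eqVneq (wseq I) (wseq J).
  have /eqP/wseq_eqP eIJk := eIJ; rewrite mul1r.
  have -> : mxsub (widx I) (widx J) (rdiag_mx n d) = diag_mx (\row_k d (widx I k)).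
    apply/matrixP => i j; rewrite !mxE -eIJk.
    have -> : (val (widx I i) == val (widx I j)) = (i == j).
      exact: (inj_eq (inj_comp val_inj (@widx_inj _ _ I))).
    by case: eqP => _; rewrite ?mul1r ?mul0r ?mulr1n ?mulr0n.
  by rewrite det_diag; apply: eq_bigr => k _; rewrite mxE.
have [k0 notinJ] := wseq_notin neqIJ.
rewrite mul0r (expand_det_row _ k0) big1 // => j _.
rewrite !mxE; case: eqP => [eIJ|_]; last by rewrite !mul0r.
by case/negP: notinJ; rewrite mem_wseq; apply/existsP; exists j; rewrite eIJ.
Qed.

Lemma mxrank_delta_rows (F : fieldType) p q (M : 'M[F]_(p, q)) (P : {set 'I_p})
    (g : 'I_p -> 'I_q) : {in P &, injective g} ->
  (forall i, row i M = if i \in P then delta_mx 0 (g i) else 0) -> \rank M = #|P|.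
Proof.
move=> ginj rowM.
have -> : (M :=: \sum_(i in P) <<delta_mx 0 (g i) : 'rV[F]_q>>)%MS.
  apply/eqmxP/andP; split.
    apply/row_subP => i; rewrite rowM; case: ifP => Pi; last by rewrite sub0mx.
    by apply: (sumsmx_sup i) => //; rewrite genmxE.
  apply/sumsmx_subP => i Pi; rewrite genmxE.
  by have := row_sub i M; rewrite rowM Pi.
rewrite (mxdirectP (mxdirect_delta _ ginj)) /= -sum1_card.
by apply: eq_bigr => i _; rewrite mxrank_gen mxrank_delta.
Qed.

Definition widen_widx t m n (le_mn : (m <= n)%N) (I : 'I_(wdim t m)) : 'I_(wdim t n) :=
  @incidx t n (fun k => widen_ord le_mn (widx I k)) (@widx_lt t m I).

Lemma wseq_widen t m n (le_mn : (m <= n)%N) (I : 'I_(wdim t m)) :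
  wseq (widen_widx le_mn I) = wseq I.
Proof. by apply/eqP/wseq_eqP => k; rewrite widx_incidx. Qed.

Definition wpid_mx (R : nzRingType) t m n (P : {set 'I_(wdim t m)}) :
  'M[R]_(wdim t m, wdim t n) := \matrix_(I, J) ((wseq I == wseq J) && (I \in P))%:R.

Lemma mxrank_wpid_mx (F : fieldType) t m n (P : {set 'I_(wdim t m)}) :
  (m <= n)%N -> \rank (wpid_mx F n P) = #|P|.
Proof.
move=> le_mn; apply: (mxrank_delta_rows (g := widen_widx le_mn)).
  by move=> I J _ _ /(congr1 (@wseq _ _)); rewrite !wseq_widen; apply: wseq_inj.
move=> I; apply/rowP => J; rewrite !mxE.
have -> : (wseq I == wseq J) = (J == widen_widx le_mn I).
  by rewrite -(inj_eq (@wseq_inj _ _)) wseq_widen eq_sym.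
by case: (I \in P); rewrite ?andbT ?andbF ?mxE.
Qed.

Lemma card_between_sets (T : finType) (A B : {set T}) k :
  A \subset B -> (#|A| <= k)%N ->
  #|[set S : {set T} | [&& #|S| == k, A \subset S & S \subset B]]|
    = 'C(#|B| - #|A|, k - #|A|).
Proof.
move=> subAB leAk; rewrite -cardsDS // -cards_draws.
pose draws := [set S' : {set T} | S' \subset B :\: A & #|S'| == (k - #|A|)%N].
have disjA S' : S' \in draws -> [disjoint S' & A].
  by rewrite inE subsetD => /andP[/andP[]].
have -> : [set S : {set T} | [&& #|S| == k, A \subset S & S \subset B]]
          = (fun S' => A :|: S') @: draws.
  apply/setP => S; rewrite inE; apply/and3P/imsetP => [[/eqP cardS subAS subSB]|].
    exists (S :\: A); last by rewrite -{1}(setID S A) (setIidPr subAS).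
    by rewrite inE setSD //= cardsDS // cardS.
  case=> S' draws_S' ->; have := draws_S'; rewrite inE => /andP[subS' /eqP cardS'].
  split; last 2 first.
  - exact: subsetUl.
  - by rewrite subUset subAB (subset_trans subS') ?subsetDl.
  have /eqP -> : #|A :|: S'| == (#|A| + #|S'|)%N.
    by rewrite (leq_card_setU _ _).2 disjoint_sym disjA.
  by rewrite cardS' subnKC.
rewrite card_in_imset // => S1 S2 /disjA/setDidPl eS1 /disjA/setDidPl eS2.
by move/(congr1 (fun S => S :\: A)); rewrite !setDUl setDv !set0U eS1 eS2.
Qed.

Definition lowset m a : {set 'I_m} := [set j : 'I_m | (j < a)%N].

Lemma card_lowset m a : (a <= m)%N -> #|lowset m a| = a.
Proof.
move=> le_am; have -> : lowset m a = widen_ord le_am @: 'I_a.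
  apply/setP => j; rewrite inE; apply/idP/imsetP => [lt_ja|[k _ ->]] //=.
  by exists (Ordinal lt_ja) => //; apply: val_inj.
by rewrite card_imset ?card_ord // => i j /(congr1 val) eij; apply: val_inj.
Qed.

Lemma lowsetS m a b : (a <= b)%N -> lowset m a \subset lowset m b.
Proof. by move=> le_ab; apply/subsetP => j; rewrite !inE => /leq_trans; apply. Qed.

Lemma wset_sub_lowset t m c (I : 'I_(wdim t m)) :
  (wset I \subset lowset m c) = [forall k, widx I k < c]%N.
Proof.
apply/subsetP/forallP => [sub k | lt_c _ /imsetP[k _ ->]]; last by rewrite inE.
by have := sub (widx I k); rewrite inE; apply; apply/imsetP; exists k.
Qed.

Definition wbetween t m a b : {set 'I_(wdim t m)} :=
  [set I | (lowset m a \subset wset I) && (wset I \subset lowset m b)].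

Lemma card_wbetween t m a b : (0 < m)%N -> (a <= t)%N -> (a <= b <= m)%N ->
  #|wbetween t m a b| = 'C(b - a, t - a).
Proof.
move=> m_gt0 le_at /andP[le_ab le_bm].
have := card_between_sets (k := t) (lowsetS m le_ab).
rewrite !card_lowset ?le_at ?(leq_trans le_ab) // => /(_ isT) <-.
rewrite -(card_imset _ (@wset_inj t m)); apply: eq_card => S; rewrite inE.
apply/imsetP/and3P => [[I betwI ->]|[/eqP cardS subA subB]].
  by move: betwI; rewrite inE => /andP[]; rewrite card_wset.
have [I eIS] := wset_surj m_gt0 cardS.
by exists I; rewrite // inE eIS subA.
Qed.

Definition wcontaining t m a : {set 'I_(wdim t m)} := [set I | lowset m a \subset wset I].

Lemma card_widx_lt t m a (I : 'I_(wdim t m)) :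
  #|[set k | widx I k < a]%N| = #|lowset m a :&: wset I|.
Proof.
rewrite -(card_imset [set k | widx I k < a]%N (@widx_inj _ _ I)).
apply: eq_card => j; rewrite !inE.
apply/imsetP/andP => [[k lt_ka ->]|[lt_ja /imsetP[k _ ejk]]].
  by rewrite inE in lt_ka; split; [|apply/imsetP; exists k].
by exists k; rewrite // inE -ejk.
Qed.

(** * Membership in X_t *)

Section CharZero.
Variable K : fieldType.
Hypothesis charK0 : [pchar K] =i pred0.

Lemma natr_inj_pchar0 : injective (fun n : nat => n%:R : K).
Proof.
move=> i j; wlog le_ij : i j / (i <= j)%N.
  by move=> wlog_ij eij; case: (leqP i j) => [|/ltnW] le; [|apply/esym]; apply: wlog_ij.
move=> /= eij; apply/eqP; rewrite eqn_leq le_ij /= -subn_eq0.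
by rewrite -((pcharf0P K).1 charK0) natrB // eij subrr.
Qed.

Lemma poly_eq0_nonzero_roots (Q : {poly K}) :
  (forall s, s != 0 -> Q.[s] = 0) -> Q = 0.
Proof.
move=> rootQ; apply: (@roots_geq_poly_eq0 _ Q [seq i.+1%:R | i <- iota 0 (size Q)]).
- by apply/allP => _ /mapP[i _ ->]; rewrite /root rootQ // ((pcharf0P K).1 charK0).
- by rewrite map_inj_uniq ?iota_uniq // => i j /natr_inj_pchar0 [].
- by rewrite size_map size_iota.
Qed.

Lemma meval_curve0 N (p : {mpoly K[N]}) (E : 'I_N -> {poly K}) :
  (forall s, s != 0 -> p.@[fun i => (E i).[s]] = 0) -> p.@[fun i => (E i).[0]] = 0.
Proof.
move=> vanish_p.
pose Q := \sum_(mo <- msupp p) (p@_mo)%:P * \prod_i E i ^+ mo i.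
have hornerQ s : Q.[s] = p.@[fun i => (E i).[s]].
  rewrite mevalE horner_sum; apply: eq_bigr => mo _.
  rewrite hornerM hornerC horner_prod; congr (_ * _); apply: eq_bigr => i _.
  by rewrite horner_exp.
by rewrite -hornerQ (poly_eq0_nonzero_roots (Q := Q)) ?horner0 // => s /vanish_p <-.
Qed.

Lemma in_Xt_poly_curve t m n (x : 'M[K]_(wdim t m, wdim t n))
    (E : 'M[{poly K}]_(wdim t m, wdim t n)) (phi : K -> 'M[K]_(m, n)) :
  (forall s, s != 0 -> map_mx (horner^~ s) E = compound t (phi s)) ->
  map_mx (horner^~ 0) E = x -> in_Xt x.
Proof.
move=> E_phi <- p vanish_p.
have coordsE s k : (mxvec E 0 k).[s] = coords (map_mx (horner^~ s) E) k.
  by rewrite /coords -map_mxvec mxE.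
rewrite -(meval_eq _ (coordsE 0)); apply: meval_curve0 => s s_neq0.
by rewrite (meval_eq _ (coordsE s)) E_phi.
Qed.
End CharZero.


Section BetweenCurve.
Variables (K : fieldType) (t m a b : nat).
Hypotheses (le_at : (a <= t)%N) (le_ab : (a <= b)%N) (le_bm : (b <= m)%N).

Definition between_weights (s : K) (i : 'I_m) : K :=
  if (i < a)%N then s ^- (t - a) else if (i < b)%N then s ^+ a else 0.

Let low_count (I : 'I_(wdim t m)) := #|lowset m a :&: wset I|.

Lemma prod_between_weights (s : K) (I : 'I_(wdim t m)) : s != 0 ->
  \prod_k between_weights s (widx I k)
    = (wset I \subset lowset m b)%:R * s ^+ (t * (a - low_count I)).
Proof.
move=> s_neq0; have [subB|] := boolP (wset I \subset lowset m b); last first.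
  rewrite wset_sub_lowset negb_forall => /existsP[k]; rewrite -leqNgt => le_bk.
  rewrite mul0r; apply/eqP/prodf_eq0; exists k => //.
  by rewrite /between_weights !ifN // -leqNgt // (leq_trans le_ab le_bk).
have low_countE : #|[pred k | widx I k < a]%N| = low_count I.
  by rewrite /low_count -card_widx_lt; apply: eq_card => k; rewrite inE.
have le_ca : (low_count I <= a)%N.
  by rewrite -[X in (_ <= X)%N](card_lowset (leq_trans le_ab le_bm)) subset_leq_card ?subsetIl.
have le_ct : (low_count I <= t)%N by rewrite -(card_wset I) subset_leq_card ?subsetIr.
rewrite mul1r (bigID (fun k => widx I k < a)%N) /=.
rewrite (eq_bigr (fun _ => s ^- (t - a))) => [|k lt_ka]; last by rewrite /between_weights lt_ka.
rewrite [X in _ * X](eq_bigr (fun _ => s ^+ a)) => [|k /negbTE ge_ka]; last first.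
  by move: subB; rewrite /between_weights ge_ka wset_sub_lowset => /forallP->.
rewrite !prodr_const low_countE.
have -> : #|[pred k | ~~ (widx I k < a)%N]| = (t - low_count I)%N.
  rewrite -low_countE -[X in (X - _)%N]card_ord -(cardC [pred k | widx I k < a]%N) addKn.
  by apply: eq_card => k; rewrite !inE.
have splitE : (a * (t - low_count I) = t * (a - low_count I) + (t - a) * low_count I)%N.
  by nia.
by rewrite exprVn -!exprM splitE exprD mulrC mulfK // expf_neq0.
Qed.

Lemma in_Xt_wbetween n : [pchar K] =i pred0 -> (0 < t)%N ->
  in_Xt (wpid_mx K n (wbetween t m a b)).
Proof.
move=> charK0 t_gt0.
pose E : 'M[{poly K}]_(wdim t m, wdim t n) := \matrix_(I, J)
  (((wseq I == wseq J) && (wset I \subset lowset m b))%:R *: 'X^(t * (a - low_count I))).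
apply: (@in_Xt_poly_curve _ charK0 _ _ _ _ E (fun s => rdiag_mx n (between_weights s))).
  move=> s s_neq0; apply/matrixP => I J.
  by rewrite compound_rdiag_mx prod_between_weights // !mxE hornerZ hornerXn mulrA -natrM mulnb.
apply/matrixP => I J; rewrite !mxE hornerZ hornerXn expr0n inE.
have -> : (t * (a - low_count I) == 0)%N = (lowset m a \subset wset I).
  rewrite muln_eq0 eqn0Ngt t_gt0 subn_eq0 /low_count.
  rewrite -[X in (X <= _)%N](card_lowset (leq_trans le_ab le_bm)).
  by rewrite (geq_leqif (subset_leqif_cards (subsetIl _ _))); apply/eqP/setIidPl.
by rewrite -natrM mulnb -andbA [(wset I \subset _) && _]andbC.
Qed.

End BetweenCurve.

(** * The small rank *)

Definition diag_set_mx (R : nzRingType) k (A : {set 'I_k}) : 'M[R]_k :=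
  diag_mx (\row_i (i \in A)%:R).

Lemma mxrank_diag_set_mx (F : fieldType) k (A : {set 'I_k}) :
  \rank (diag_set_mx F A) = #|A|.
Proof.
apply: (mxrank_delta_rows (g := id)) => [i j _ _ //|i].
by rewrite row_diag_mx mxE; case: (i \in A); rewrite ?scale1r ?scale0r.
Qed.

Lemma diag_set_mxC (R : nzRingType) k (A : {set 'I_k}) :
  diag_set_mx R A + diag_set_mx R (~: A) = 1%:M.
Proof.
apply/matrixP => i j; rewrite !mxE inE -mulrnDl.
by case: (i \in A); rewrite ?add0r ?addr0.
Qed.

Lemma det_eq0_rank_lt (F : fieldType) k (M : 'M[F]_k) : (\rank M < k)%N -> \det M = 0.
Proof.
apply: contraTeq => det_neq0; rewrite -leqNgt mxrank_unit //.
by rewrite unitmxE unitfE.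
Qed.

(* A coarse Cauchy-Binet formula: the sum runs over all maps, not just increasing ones. *)
Lemma det_mulmx_sum_ffun (R : comNzRingType) t p (C : 'M[R]_(t, p)) (D : 'M[R]_(p, t)) :
  \det (C *m D) = \sum_(f : {ffun 'I_t -> 'I_p}) (\prod_k C k (f k)) * \det (rowsub f D).
Proof.
transitivity (\sum_(f : {ffun 'I_t -> 'I_p}) \sum_(s : 'S_t)
                 (-1) ^+ s * \prod_i (C i (f i) * D (f i) (s i))).
  rewrite exchange_big; apply: eq_bigr => /= s _; rewrite -big_distrr /=.
  congr (_ * _); rewrite -(bigA_distr_bigA (fun i j => C i j * D j (s i))) /=.
  by apply: eq_bigr => x _; rewrite mxE.
apply: eq_bigr => f _; rewrite big_distrr; apply: eq_bigr => s _ /=.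
rewrite big_split /= mulrCA; congr (_ * (_ * _)); apply: eq_bigr => i _.
by rewrite mxE.
Qed.

Lemma det_mxsub_mulmx (R : comNzRingType) t m p q (f : 'I_t -> 'I_m) (g : 'I_t -> 'I_q)
    (C : 'M[R]_(m, p)) (D : 'M[R]_(p, q)) :
  \det (mxsub f g (C *m D)) =
  \sum_(h : {ffun 'I_t -> 'I_p}) (\prod_k C (f k) (h k)) * \det (mxsub h g D).
Proof.
rewrite mxsub_mul det_mulmx_sum_ffun; apply: eq_bigr => h _.
congr (_ * _); first by apply: eq_bigr => k _; rewrite mxE.
by congr (\det _); apply/matrixP => i j; rewrite !mxE.
Qed.

Section LowerBlockMinors.
Variables (F : fieldType) (t m a : nat) (D : 'M[F]_(t.+1, m)).
Hypotheses (le_at : (a <= t)%N) (le_tm : (t <= m)%N).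
Hypothesis D_lower : forall (i : 'I_t.+1) (j : 'I_m), (a <= i)%N -> (j < a)%N -> D i j = 0.

Lemma det_minor_eq0 (f : 'I_t -> 'I_t.+1) (r : 'I_t.+1) (S : 'I_(wdim t m)) :
  injective f -> (forall k, f k != r) -> (r < a)%N -> S \in wcontaining t m a ->
  \det (mxsub f (widx S) D) = 0.
Proof.
move=> f_inj f_neq_r lt_ra; rewrite inE => subS.
set M := mxsub f (widx S) D.
pose lowcols := [set k | widx S k < a]%N.
pose lowrows := [set i | f i < a]%N.
have M_lowcols : M *m diag_set_mx F lowcols = diag_set_mx F lowrows *m M *m diag_set_mx F lowcols.
  apply/matrixP => i k; rewrite !mul_mx_diag mul_diag_mx !mxE !inE.
  case: (ltnP (f i) a) => [_|ge_fa]; first by rewrite mul1r.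
  by case: ltnP => [lt_ka|_]; rewrite ?mulr0 // D_lower ?mul0r.
have rank_low : (\rank (M *m diag_set_mx F lowcols) <= a.-1)%N.
  rewrite M_lowcols; apply: leq_trans (mxrankM_maxl _ _) _.
  apply: leq_trans (mxrankM_maxl _ _) _; rewrite mxrank_diag_set_mx.
  have sub_f : f @: lowrows \subset lowset t.+1 a :\ r.
    by apply/subsetP => _ /imsetP[i lt_fa ->]; move: lt_fa; rewrite !inE f_neq_r.
  rewrite -(card_imset _ f_inj); apply: leq_trans (subset_leq_card sub_f) _.
  have := cardsD1 r (lowset t.+1 a); rewrite inE lt_ra card_lowset ?(leq_trans le_at) //.
  by move=> card_a; rewrite {2}card_a add1n.
have rank_high : (\rank (M *m diag_set_mx F (~: lowcols)) <= t - a)%N.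
  apply: leq_trans (mxrankM_maxr _ _) _.
  rewrite mxrank_diag_set_mx cardsCs setCK card_ord /lowcols card_widx_lt (setIidPl subS).
  by rewrite card_lowset ?(leq_trans le_at).
apply: det_eq0_rank_lt; rewrite -[M]mulmx1 -(diag_set_mxC _ lowcols) mulmxDr.
apply: leq_ltn_trans (mxrank_add _ _) _; apply: leq_ltn_trans (leq_add rank_low rank_high) _.
by move: lt_ra; clear -le_at; lia.
Qed.

Definition minor_row (f : 'I_t -> 'I_t.+1) : 'rV[F]_(wdim t m) :=
  \row_S (\det (mxsub f (widx S) D) * (S \in wcontaining t m a)%:R).

Definition minor_rows : 'M[F]_(t.+1 - a, wdim t m) :=
  \matrix_i minor_row (lift (inord (a + i))).

Lemma minor_row_sub (f : 'I_t -> 'I_t.+1) : (minor_row f <= minor_rows)%MS.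
Proof.
have [/injectiveP f_inj|/injectivePn[i1 [i2 neq_i12 eq_f12]]] := boolP (injectiveb f); last first.
  suff -> : minor_row f = 0 by rewrite sub0mx.
  apply/rowP => S; rewrite !mxE (determinant_alternate neq_i12) ?mul0r // => j.
  by rewrite !mxE eq_f12.
have [r f_neq_r] : exists r, forall k, f k != r.
  have : ~~ ([set: 'I_t.+1] \subset f @: 'I_t).
    apply/negP => /subset_leq_card; rewrite cardsT card_ord card_imset // card_ord.
    by rewrite ltnn.
  case/subsetPn => r _ /negP notin_r; exists r => k; apply/eqP => eq_fr; apply: notin_r.
  by rewrite -eq_fr imset_f.
have [lt_ra|le_ar] := ltnP r a.
  suff -> : minor_row f = 0 by rewrite sub0mx.
  apply/rowP => S; rewrite !mxE; have [contS|] := boolP (S \in wcontaining t m a).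
    by rewrite (det_minor_eq0 f_inj f_neq_r lt_ra contS) mul0r.
  by rewrite mulr0.
pose g i := odflt i (unlift r (f i)).
have fE i : f i = lift r (g i).
  rewrite /g; case: unliftP => [j -> //|eq_fr].
  by move: (f_neq_r i); rewrite eq_fr eqxx.
have g_inj : injective g by move=> i j eq_g; apply: f_inj; rewrite !fE eq_g.
have lt_row_idx : (r - a < t.+1 - a)%N by rewrite ltn_sub2r // ltnS.
suff -> : minor_row f = (-1) ^+ perm g_inj *: row (Ordinal lt_row_idx) minor_rows.
  by rewrite scalemx_sub // row_sub.
apply/rowP => S; rewrite rowK !mxE.
have -> : inord (a + (r - a)) = r :> 'I_t.+1.
  by apply: val_inj; rewrite /= subnKC // inordK.
have -> : mxsub f (widx S) D = row_perm (perm g_inj) (mxsub (lift r) (widx S) D).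
  by apply/matrixP => i j; rewrite !mxE permE fE.
by rewrite row_permE det_mulmx det_perm mulrA.
Qed.

End LowerBlockMinors.

Lemma factor_lower_block (F : fieldType) t m a (U : 'M[F]_m) :
  (a <= m)%N -> (\rank U <= t.+1)%N ->
  exists C : 'M[F]_(m, t.+1), exists D : 'M[F]_(t.+1, m), U = C *m D /\
    forall (i : 'I_t.+1) (j : 'I_m), (a <= i)%N -> (j < a)%N -> D i j = 0.
Proof.
move=> le_am rankU.
pose C0 := col_ebase U *m (pid_mx (\rank U) : 'M[F]_(m, t.+1)).
pose D0 := (pid_mx (\rank U) : 'M[F]_(t.+1, m)) *m row_ebase U.
pose X := D0 *m diag_set_mx F (lowset m a).
pose G := col_ebase X.
have rankX : (\rank X <= a)%N.
  by apply: leq_trans (mxrankM_maxr _ _) _; rewrite mxrank_diag_set_mx card_lowset.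
exists (C0 *m G), (invmx G *m D0); split.
  rewrite -mulmxA (mulmxA G) mulmxV ?col_ebase_unit // mul1mx mulmxA.
  by rewrite -(mulmxA (col_ebase U)) mul_pid_mx minnn (minn_idPr rankU) mulmx_ebase.
move=> i j le_ai lt_ja.
have -> : (invmx G *m D0) i j = (invmx G *m X) i j.
  by rewrite /X [in RHS]mulmxA mul_mx_diag mxE [X in _ * X]mxE inE lt_ja mulr1.
rewrite -{1}(mulmx_ebase X) -/G !mulmxA mulVmx ?col_ebase_unit // mul1mx mxE big1 // => l _.
by rewrite mxE ltnNge (leq_trans rankX le_ai) andbF mul0r.
Qed.

Lemma mxrank_compound_wcontaining (F : fieldType) t m a (U : 'M[F]_m) :
  (a <= t)%N -> (t <= m)%N -> (\rank U <= t.+1)%N ->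
  (\rank (compound t U *m diag_set_mx F (wcontaining t m a)) <= t.+1 - a)%N.
Proof.
move=> le_at le_tm rankU.
have [C [D [-> D_lower]]] := factor_lower_block (leq_trans le_at le_tm) rankU.
apply: leq_trans (rank_leq_row (minor_rows a D)).
apply: mxrankS; apply/row_subP => I.
have -> : row I (compound t (C *m D) *m diag_set_mx F (wcontaining t m a)) =
    \sum_(f : {ffun 'I_t -> 'I_t.+1}) (\prod_k C (widx I k) (f k)) *: minor_row a D f.
  apply/rowP => S; rewrite mul_mx_diag summxE !mxE det_mxsub_mulmx big_distrl.
  by apply: eq_bigr => f _; rewrite !mxE mulrA.
by apply: summx_sub => f _; apply/scalemx_sub/minor_row_sub.
Qed.

Lemma prod_widx_lt (R : idomainType) t m c (I : 'I_(wdim t m)) :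
  \prod_k ((widx I k < c)%N%:R : R) = (wset I \subset lowset m c)%:R.
Proof.
rewrite wset_sub_lowset.
have [/forallP lt_c|/forallPn[k ge_kc]] := boolP [forall k, widx I k < c]%N.
  by rewrite big1 // => k _; rewrite lt_c.
by apply/eqP/prodf_eq0; exists k => //; rewrite (negbTE ge_kc).
Qed.

Lemma compound_pid_wpid_mx (F : fieldType) t m n c (P : {set 'I_(wdim t m)}) :
  compound t (pid_mx c : 'M[F]_m) *m wpid_mx F n P
    = wpid_mx F n (P :&: [set I | wset I \subset lowset m c]).
Proof.
have -> : (pid_mx c : 'M[F]_m) = rdiag_mx m (fun i => (i < c)%N%:R).
  by apply/matrixP => i j; rewrite !mxE -natrM mulnb.
apply/matrixP => I J; rewrite !mxE (bigD1 I) //= big1 => [|I' neq_I'I].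
  rewrite compound_rdiag_mx eqxx mul1r addr0 prod_widx_lt !mxE !inE -natrM mulnb.
  by rewrite andbC -andbA.
rewrite compound_rdiag_mx; case: eqP => [/wseq_inj eq_II'|]; last by rewrite !mul0r.
by rewrite eq_II' eqxx in neq_I'I.
Qed.

Lemma small_rank_wbetween (F : fieldType) t m n a b c :
  (0 < t)%N -> (a <= t)%N -> (t <= m <= n)%N -> (a <= c <= b)%N -> (b <= m)%N ->
  (c <= t.+1)%N -> 'C(c - a, t - a) = (t.+1 - a)%N ->
  small_rank_is (wpid_mx F n (wbetween t m a b)) (t.+1 - a).
Proof.
move=> t_gt0 le_at /andP[le_tm le_mn] /andP[le_ac le_cb] le_bm le_ct bin_ca.
split=> [|U rankU].
  exists (pid_mx c); rewrite rank_pid_mx ?(leq_trans le_cb le_bm) //; split=> //.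
  rewrite compound_pid_wpid_mx mxrank_wpid_mx //.
  have -> : wbetween t m a b :&: [set I | wset I \subset lowset m c] = wbetween t m a c.
    apply/setP => I; rewrite !inE -andbA; congr (_ && _).
    apply/andP/idP => [[] //|sub_c]; split=> //.
    exact: subset_trans sub_c (lowsetS m le_cb).
  by rewrite card_wbetween ?le_ac ?(leq_trans le_cb) ?(leq_trans t_gt0 le_tm).
have -> : wpid_mx F n (wbetween t m a b)
          = diag_set_mx F (wcontaining t m a) *m wpid_mx F n (wbetween t m a b).
  apply/matrixP => I J; rewrite mul_diag_mx !mxE !inE.
  by case: (lowset m a \subset wset I); rewrite ?mul1r ?andbF ?mul0r.
by rewrite mulmxA; apply: leq_trans (mxrankM_maxl _ _) _; apply: mxrank_compound_wcontaining.
Qed.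

Lemma small_rank_rank0 (F : fieldType) t m n (x : 'M[F]_(wdim t m, wdim t n)) :
  \rank x = 0%N -> small_rank_is x 0.
Proof.
move=> rank0; have rank_mul0 (U : 'M[F]_m) : \rank (compound t U *m x) = 0%N.
  by apply/eqP; rewrite -leqn0 -rank0 mxrankM_maxr.
by split=> [|U _]; [exists 0; rewrite mxrank0 rank_mul0 | rewrite rank_mul0].
Qed.

Unset Implicit Arguments.
Theorem proposition2p2 (K : closedFieldType) (hK : [pchar K] =i pred0)
  (t m n : nat) (ht : (1 <= t)%N) (htm : (t <= m)%N) (hmn : (m <= n)%N) :
  (exists x : 'M[K]_(wdim t m, wdim t n),
      @in_Xt K t m n x /\ @small_rank_is K t m n x 0 /\ \rank x = 0%N) /\
  (exists x : 'M[K]_(wdim t m, wdim t n),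
      @in_Xt K t m n x /\ @small_rank_is K t m n x 1 /\ \rank x = 1%N) /\
  (forall u k : nat, (2 <= u <= t.+1)%N -> (1 <= k <= m - t)%N ->
    exists x : 'M[K]_(wdim t m, wdim t n),
      @in_Xt K t m n x /\ @small_rank_is K t m n x u /\ \rank x = 'C(u + k - 1, u - 1)).
Proof.
have m_gt0 : (0 < m)%N := leq_trans ht htm.
have htmn : (t <= m <= n)%N by rewrite htm hmn.
split; [|split].
- exists (wpid_mx K n (wbetween t m 0 0)).
  have rank0 : \rank (wpid_mx K n (wbetween t m 0 0)) = 0%N.
    by rewrite mxrank_wpid_mx // card_wbetween // bin0n subn0 eqn0Ngt ht.
  split; first exact: in_Xt_wbetween.
  by split; [apply: small_rank_rank0 | ].
- exists (wpid_mx K n (wbetween t m t t)).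
  split; first exact: in_Xt_wbetween.
  split; last by rewrite mxrank_wpid_mx // card_wbetween ?leqnn // subnn bin0.
  rewrite -[X in small_rank_is _ X](subSnn t).
  by apply: (@small_rank_wbetween K t m n t t t); rewrite ?leqnn ?subnn ?subSnn ?bin0.
- move=> u k /andP[le2u le_ut] /andP[le1k le_km].
  set a := (t.+1 - u)%N.
  have le_at : (a <= t)%N by rewrite /a; lia.
  have le_ab : (a <= t + k)%N by rewrite /a; lia.
  have le_bm : (t + k <= m)%N by lia.
  exists (wpid_mx K n (wbetween t m a (t + k))).
  split; first exact: in_Xt_wbetween.
  split.
    have <- : (t.+1 - a)%N = u by rewrite /a; lia.
    apply: (@small_rank_wbetween K t m n a (t + k) t.+1) => //.
      by rewrite (leq_trans le_at) //; lia.
    by rewrite subSn // binSn.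
  rewrite mxrank_wpid_mx // card_wbetween ?le_ab //; congr 'C(_, _); rewrite /a; lia.
Qed.
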